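(* Let $0<p<1$, let $u_1,\dots,u_4,v_1,\dots,v_4$ be real numbers with $u_r>0$ and $|v_r|<u_r+\tfrac12$ for $r=1,2$, let $\textsc{m}\in\mathbb{N}$, and put $\alpha=\pi/(u_1+u_2+\textsc{m})$. Then for every $k\in\{1,\dots,\textsc{m}\}$ the numbers $$a_k=\prod_{r=1}^4\frac{[u_1-u_r+k]_r\,[u_1-v_r-\frac12+k]_r}{[u_1+k]_r\,[u_1-\frac12+k]_r},\qquad \tilde a_k=\prod_{r=1}^4\frac{[u_2-u_{\pi_2(r)}+k]_r\,[u_2-v_{\pi_2(r)}-\frac12+k]_r}{[u_2+k]_r\,[u_2-\frac12+k]_r}$$ are (well defined and) strictly positive.
   Context: Jacobi theta functions with nome $0<p<1$: $\theta_1(z)=2p^{1/4}\sin z\prod_{n\ge1}(1-p^{2n})(1-2p^{2n}\cos 2z+p^{4n})$, $\theta_2(z)=2p^{1/4}\cos z\prod_{n\ge1}(1-p^{2n})(1+2p^{2n}\cos 2z+p^{4n})$, $\theta_3(z)=\prod_{n\ge1}(1-p^{2n})(1+2p^{2n-1}\cos 2z+p^{4n-2})$, $\theta_4(z)=\prod_{n\ge1}(1-p^{2n})(1-2p^{2n-1}\cos 2z+p^{4n-2})$. Rescaled theta functions: $[z]_1=\theta_1(\frac{\alpha}{2}z)/(\frac{\alpha}{2}\theta_1'(0))$ and $[z]_r=\theta_r(\frac{\alpha}{2}z)/\theta_r(0)$ for $r=2,3,4$. The permutation $\pi_2\in S_4$ is $\pi_2=(12)(34)$. *)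

From Stdlib Require Import Reals.
From Coquelicot Require Import Coquelicot.
Open Scope R_scope.

Fixpoint prod1 (f : nat -> R) (N : nat) : R :=
  match N with
  | O => 1
  | S N' => prod1 f N' * f (S N')
  end.

Definition infprod (f : nat -> R) : R := real (Lim_seq (fun N => prod1 f N)).

Definition theta1 (p z : R) : R :=
  2 * Rpower p (1/4) * sin z *
  infprod (fun n => (1 - p ^ (2*n)) * (1 - 2 * p ^ (2*n) * cos (2*z) + p ^ (4*n))).
Definition theta2 (p z : R) : R :=
  2 * Rpower p (1/4) * cos z *
  infprod (fun n => (1 - p ^ (2*n)) * (1 + 2 * p ^ (2*n) * cos (2*z) + p ^ (4*n))).
Definition theta3 (p z : R) : R :=
  infprod (fun n => (1 - p ^ (2*n)) * (1 + 2 * p ^ (2*n-1) * cos (2*z) + p ^ (4*n-2))).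
Definition theta4 (p z : R) : R :=
  infprod (fun n => (1 - p ^ (2*n)) * (1 - 2 * p ^ (2*n-1) * cos (2*z) + p ^ (4*n-2))).

Definition theta (r : nat) (p z : R) : R :=
  match r with
  | 1%nat => theta1 p z
  | 2%nat => theta2 p z
  | 3%nat => theta3 p z
  | _ => theta4 p z
  end.

Definition bracket_den (p alpha : R) (r : nat) : R :=
  match r with
  | 1%nat => alpha / 2 * Derive (theta1 p) 0
  | _ => theta r p 0
  end.

Definition bracket (p alpha : R) (r : nat) (z : R) : R :=
  theta r p (alpha / 2 * z) / bracket_den p alpha r.

Definition prod4 (f : nat -> R) : R := f 1%nat * f 2%nat * f 3%nat * f 4%nat.

Definition pi2 (r : nat) : nat :=
  match r with
  | 1%nat => 2%nat
  | 2%nat => 1%nat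
  | 3%nat => 4%nat
  | 4%nat => 3%nat
  | _ => r
  end.

From Stdlib Require Import Reals Lra Lia.
From Coquelicot Require Import Coquelicot.
Open Scope R_scope.

(* Every factor of the products defining theta_1, ..., theta_4 lies between
   exp (-C p^n) and exp (C p^n), so the products lie between two positive
   constants independent of z.  Hence theta_3 and theta_4 are positive,
   theta_1 z and theta_2 z have the signs of sin z and cos z, and the
   difference quotients of theta_1 at 0 are squeezed between positive
   constants, so theta_1'(0) > 0.  With alpha = PI / S, S = u_1 + u_2 + M,
   [z]_1 > 0 on (0, 2S) and [z]_2 > 0 on (-S, S); the hypotheses on u and v
   place every argument occurring in a_k and tilde a_k in these intervals. *)

Lemma exp_le_compat x y : x <= y -> exp x <= exp y.
Proof.
  intros [Hlt | ->]; [now apply Rlt_le, exp_increasing | apply Rle_refl].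
Qed.

Lemma Rle_pow_le1 x n m : 0 <= x <= 1 -> (n <= m)%nat -> x ^ m <= x ^ n.
Proof.
  intros Hx Hnm. replace m with (n + (m - n))%nat by lia. rewrite pow_add.
  assert (x ^ (m - n) <= 1) by (rewrite <- (pow1 (m - n)); apply pow_incr; lra).
  assert (0 <= x ^ n) by (apply pow_le; lra).
  nra.
Qed.

Lemma exp_neg_div_le_one_sub w : 0 <= w < 1 -> exp (- (w / (1 - w))) <= 1 - w.
Proof.
  intros Hw.
  assert (Hge : / (1 - w) <= exp (w / (1 - w))).
  { replace (/ (1 - w)) with (1 + w / (1 - w)) by (field; lra).
    apply exp_ineq1_le. }
  apply Rinv_le_contravar in Hge; [|apply Rinv_0_lt_compat; lra].
  now rewrite Rinv_inv in Hge; rewrite exp_Ropp.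
Qed.

Lemma sin_div_bounds h : 0 < h <= 1 -> 1 / 2 <= sin h / h <= 1.
Proof.
  intros Hh.
  assert (Hlb : h - h ^ 3 / 6 <= sin h).
  { destruct (pre_sin_bound h 0) as [Hlb _]; try lra.
    unfold sin_approx, sin_term in Hlb. simpl in Hlb. lra. }
  assert (Hub : sin h < h) by (apply sin_lt_x; lra).
  assert (h ^ 3 <= h) by (simpl; nra).
  assert (Hcancel : sin h / h * h = sin h) by (field; lra).
  split; apply Rmult_le_reg_r with h; lra.
Qed.

Lemma real_Lim_seq_between (u : nat -> R) a b :
  (forall n, a <= u n <= b) -> a <= real (Lim_seq u) <= b.
Proof.
  intros Hu.
  assert (La : Rbar_le (Lim_seq (fun _ => a)) (Lim_seq u))
    by (apply Lim_seq_le_loc; exists 0%nat; intros n _; apply Hu).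
  assert (Lb : Rbar_le (Lim_seq u) (Lim_seq (fun _ => b)))
    by (apply Lim_seq_le_loc; exists 0%nat; intros n _; apply Hu).
  rewrite Lim_seq_const in La, Lb.
  destruct (Lim_seq u); simpl in *; try contradiction; lra.
Qed.

(* Coquelicot's [Derive] is the limit of the difference quotients along
   the step sizes 1/(n+1), so it needs no differentiability to be bounded. *)
Lemma Derive_between (f : R -> R) x a b :
  (forall h, 0 < h <= 1 -> a <= (f (x + h) - f x) / h <= b) ->
  a <= Derive f x <= b.
Proof.
  intros Hq. apply real_Lim_seq_between. intro n. simpl. apply Hq.
  pose proof (pos_INR n). rewrite Rplus_0_l.
  split; [apply Rinv_0_lt_compat; lra|].
  rewrite <- Rinv_1. apply Rinv_le_contravar; lra.
Qed.

Lemma prod1_exp_bounds (f : nat -> R) p C N : 0 < p < 1 ->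
  (forall n, (1 <= n)%nat -> exp (- (C * p ^ n)) <= f n <= exp (C * p ^ n)) ->
  exp (- (C * (p - p ^ S N) / (1 - p))) <= prod1 f N
    <= exp (C * (p - p ^ S N) / (1 - p)).
Proof.
  intros Hp Hf. induction N as [|N [IHlo IHhi]].
  - simpl. replace (p - p * 1) with 0 by ring.
    rewrite !Rmult_0_r, Rdiv_0_l, Ropp_0, exp_0. lra.
  - destruct (Hf (S N)) as [Hlo Hhi]; [lia|].
    assert (Hsum : C * (p - p ^ S (S N)) / (1 - p)
                   = C * (p - p ^ S N) / (1 - p) + C * p ^ S N)
      by (change (p ^ S (S N)) with (p * p ^ S N); field; lra).
    simpl prod1. rewrite Hsum, Ropp_plus_distr, !exp_plus.
    pose proof (exp_pos (- (C * (p - p ^ S N) / (1 - p)))).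
    pose proof (exp_pos (- (C * p ^ S N))).
    split; apply Rmult_le_compat; lra.
Qed.

Lemma infprod_exp_bounds (f : nat -> R) p C : 0 < p < 1 -> 0 <= C ->
  (forall n, (1 <= n)%nat -> exp (- (C * p ^ n)) <= f n <= exp (C * p ^ n)) ->
  exp (- (C / (1 - p))) <= infprod f <= exp (C / (1 - p)).
Proof.
  intros Hp HC Hf. apply real_Lim_seq_between. intro N.
  destruct (prod1_exp_bounds f p C N Hp Hf) as [Hlo Hhi].
  assert (C * (p - p ^ S N) / (1 - p) <= C / (1 - p)).
  { unfold Rdiv. apply Rmult_le_compat_r; [apply Rlt_le, Rinv_0_lt_compat; lra|].
    pose proof (pow_le p (S N)). nra. }
  split; [eapply Rle_trans, Hlo | eapply Rle_trans; [apply Hhi|]];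
    apply exp_le_compat; lra.
Qed.

Lemma infprod_ext (f g : nat -> R) :
  (forall n, (1 <= n)%nat -> f n = g n) -> infprod f = infprod g.
Proof.
  intros Hfg. unfold infprod. f_equal. apply Lim_seq_ext.
  intro N. induction N as [|N IH]; simpl; [reflexivity|].
  rewrite IH, Hfg; [reflexivity | lia].
Qed.

(* The common shape of the factors of theta_1, ..., theta_4:
   [c] is +-cos (2z) and [y, x] are powers p^(2n) or p^(2n-1). *)
Lemma theta_factor_exp_bounds p w x y c :
  w <= p < 1 -> 0 <= x <= w -> 0 <= y <= w -> -1 <= c <= 1 ->
  exp (- (3 / (1 - p) * w)) <= (1 - y) * (1 + 2 * x * c + x ^ 2)
    <= exp (3 / (1 - p) * w).
Proof.
  intros Hp Hx Hy Hc.
  assert (Hinv_w : / (1 - w) <= / (1 - p)) by (apply Rinv_le_contravar; lra).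
  assert (Hinv_1 : 1 <= / (1 - p))
    by (rewrite <- Rinv_1; apply Rinv_le_contravar; lra).
  assert (Hmid_lo : (1 - x) ^ 2 <= 1 + 2 * x * c + x ^ 2) by (simpl; nra).
  assert (Hmid_hi : 1 + 2 * x * c + x ^ 2 <= (1 + x) ^ 2) by (simpl; nra).
  split.
  - assert (Hexp : exp (- (w / (1 - w))) <= 1 - w)
      by (apply exp_neg_div_le_one_sub; lra).
    assert (Hcmp : 3 * (w / (1 - w)) <= 3 / (1 - p) * w) by (unfold Rdiv; nra).
    apply Rle_trans with (exp (- (w / (1 - w))) ^ 3).
    + simpl. rewrite Rmult_1_r, <- !exp_plus. apply exp_le_compat. lra.
    + apply Rle_trans with ((1 - w) ^ 3).
      * apply pow_incr. split; [apply Rlt_le, exp_pos | exact Hexp].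
      * assert ((1 - w) ^ 2 <= (1 - x) ^ 2) by (apply pow_incr; lra).
        assert (0 <= (1 - w) ^ 2) by (apply pow_le; lra).
        change ((1 - w) ^ 3) with ((1 - w) * (1 - w) ^ 2). nra.
  - apply Rle_trans with ((1 + w) ^ 2).
    + assert ((1 + x) ^ 2 <= (1 + w) ^ 2) by (apply pow_incr; lra).
      assert (0 <= (1 - x) ^ 2) by (apply pow_le; lra). nra.
    + apply Rle_trans with (exp w ^ 2).
      * apply pow_incr. pose proof (exp_ineq1_le w). lra.
      * simpl. rewrite Rmult_1_r, <- exp_plus. apply exp_le_compat.
        unfold Rdiv. nra.
Qed.

Definition theta_prod_bound (p : R) : R := 3 / (1 - p) / (1 - p).

Lemma infprod_theta_factor_bounds p (a b : nat -> nat) c : 0 < p < 1 ->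
  (forall n, (1 <= n)%nat -> (n <= a n)%nat /\ (n <= b n)%nat) -> -1 <= c <= 1 ->
  exp (- theta_prod_bound p)
    <= infprod (fun n => (1 - p ^ a n) * (1 + 2 * p ^ b n * c + (p ^ b n) ^ 2))
    <= exp (theta_prod_bound p).
Proof.
  intros Hp Hab Hc. apply infprod_exp_bounds; [exact Hp | |].
  - apply Rlt_le, Rdiv_lt_0_compat; lra.
  - intros n Hn. destruct (Hab n Hn) as [Ha Hb].
    apply theta_factor_exp_bounds; [split| split | split |]; try lra.
    + rewrite <- (pow_1 p) at 2. apply Rle_pow_le1; lra || lia.
    + apply pow_le; lra.
    + apply Rle_pow_le1; lra || lia.
    + apply pow_le; lra.
    + apply Rle_pow_le1; lra || lia.
Qed.

Lemma theta1_factorization p z : 0 < p < 1 ->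
  exists Q, exp (- theta_prod_bound p) <= Q <= exp (theta_prod_bound p) /\
    theta1 p z = 2 * Rpower p (1 / 4) * sin z * Q.
Proof.
  intros Hp. eexists. split; [|reflexivity].
  rewrite (infprod_ext _
    (fun n => (1 - p ^ (2 * n)) * (1 + 2 * p ^ (2 * n) * - cos (2 * z) + (p ^ (2 * n)) ^ 2))).
  - apply infprod_theta_factor_bounds; [exact Hp | intros; lia |].
    pose proof (COS_bound (2 * z)). lra.
  - intros n _. rewrite <- pow_mult. replace (2 * n * 2)%nat with (4 * n)%nat by lia. ring.
Qed.

Lemma theta2_factorization p z : 0 < p < 1 ->
  exists Q, 0 < Q /\ theta2 p z = 2 * Rpower p (1 / 4) * cos z * Q.
Proof.
  intros Hp. eexists. split; [|reflexivity].
  rewrite (infprod_ext _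
    (fun n => (1 - p ^ (2 * n)) * (1 + 2 * p ^ (2 * n) * cos (2 * z) + (p ^ (2 * n)) ^ 2))).
  - eapply Rlt_le_trans; [apply exp_pos|].
    apply infprod_theta_factor_bounds; [exact Hp | intros; lia |].
    apply COS_bound.
  - intros n _. rewrite <- pow_mult. replace (2 * n * 2)%nat with (4 * n)%nat by lia. ring.
Qed.

Lemma theta3_pos p z : 0 < p < 1 -> 0 < theta3 p z.
Proof.
  intros Hp. unfold theta3.
  rewrite (infprod_ext _
    (fun n => (1 - p ^ (2 * n)) * (1 + 2 * p ^ (2 * n - 1) * cos (2 * z) + (p ^ (2 * n - 1)) ^ 2))).
  - eapply Rlt_le_trans; [apply exp_pos|].
    apply infprod_theta_factor_bounds; [exact Hp | intros; lia |].
    apply COS_bound.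
  - intros n _. rewrite <- pow_mult. replace ((2 * n - 1) * 2)%nat with (4 * n - 2)%nat by lia. ring.
Qed.

Lemma theta4_pos p z : 0 < p < 1 -> 0 < theta4 p z.
Proof.
  intros Hp. unfold theta4.
  rewrite (infprod_ext _
    (fun n => (1 - p ^ (2 * n)) * (1 + 2 * p ^ (2 * n - 1) * - cos (2 * z) + (p ^ (2 * n - 1)) ^ 2))).
  - eapply Rlt_le_trans; [apply exp_pos|].
    apply infprod_theta_factor_bounds; [exact Hp | intros; lia |].
    pose proof (COS_bound (2 * z)). lra.
  - intros n _. rewrite <- pow_mult. replace ((2 * n - 1) * 2)%nat with (4 * n - 2)%nat by lia. ring.
Qed.

Lemma Derive_theta1_0_pos p : 0 < p < 1 -> 0 < Derive (theta1 p) 0.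
Proof.
  intros Hp.
  set (c := Rpower p (1 / 4)).
  assert (Hc : 0 < c) by apply exp_pos.
  assert (Hm : 0 < exp (- theta_prod_bound p)) by apply exp_pos.
  enough (Hb : c * exp (- theta_prod_bound p) <= Derive (theta1 p) 0
               <= 2 * c * exp (theta_prod_bound p)) by nra.
  apply Derive_between. intros h Hh.
  destruct (theta1_factorization p 0 Hp) as [Q0 [_ ->]].
  destruct (theta1_factorization p (0 + h) Hp) as [Q [HQ ->]].
  rewrite Rplus_0_l, sin_0 in *. fold c.
  destruct (sin_div_bounds h Hh) as [Hs_lo Hs_hi].
  replace ((2 * c * sin h * Q - 2 * c * 0 * Q0) / h) with (2 * c * Q * (sin h / h))
    by (field; lra).
  assert (c * exp (- theta_prod_bound p) <= c * Q) by (apply Rmult_le_compat_l; lra).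
  assert (c * Q <= c * exp (theta_prod_bound p)) by (apply Rmult_le_compat_l; lra).
  assert (0 < c * Q) by nra.
  split; nra.
Qed.

Lemma bracket_den_pos p alpha r : 0 < p < 1 -> 0 < alpha -> (1 <= r <= 4)%nat ->
  0 < bracket_den p alpha r.
Proof.
  intros Hp Ha Hr.
  destruct r as [|[|[|[|[|r]]]]]; try lia; unfold bracket_den, theta.
  - pose proof (Derive_theta1_0_pos p Hp). apply Rmult_lt_0_compat; lra.
  - destruct (theta2_factorization p 0 Hp) as [Q [HQ ->]]. rewrite cos_0.
    assert (0 < Rpower p (1 / 4)) by apply exp_pos.
    repeat apply Rmult_lt_0_compat; lra.
  - now apply theta3_pos.
  - now apply theta4_pos.
Qed.

(* With alpha = PI / S the theta argument of [z]_r is PI * z / (2 S); the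
   intervals are those on which its sine, resp. cosine, is positive. *)
Lemma bracket_pos p S r z : 0 < p < 1 -> 0 < S -> (1 <= r <= 4)%nat ->
  (r = 1%nat -> 0 < z < 2 * S) -> (r = 2%nat -> - S < z < S) ->
  0 < bracket p (PI / S) r z.
Proof.
  intros Hp HS Hr H1 H2.
  pose proof PI_RGT_0.
  assert (Ha : 0 < PI / S) by (apply Rdiv_lt_0_compat; lra).
  unfold bracket. apply Rdiv_lt_0_compat; [|now apply bracket_den_pos].
  assert (0 < Rpower p (1 / 4)) by apply exp_pos.
  replace (PI / S / 2 * z) with (PI * (z / (2 * S))) by (field; lra).
  destruct r as [|[|[|[|[|r]]]]]; try lia; unfold theta.
  - destruct (theta1_factorization p (PI * (z / (2 * S))) Hp) as [Q [HQ ->]].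
    specialize (H1 eq_refl).
    assert (0 < z / (2 * S) < 1)
      by (split; [apply Rdiv_lt_0_compat | apply Rlt_div_l]; lra).
    assert (0 < sin (PI * (z / (2 * S)))) by (apply sin_gt_0; nra).
    pose proof (exp_pos (- theta_prod_bound p)).
    repeat apply Rmult_lt_0_compat; lra.
  - destruct (theta2_factorization p (PI * (z / (2 * S))) Hp) as [Q [HQ ->]].
    specialize (H2 eq_refl).
    assert (- (1 / 2) < z / (2 * S) < 1 / 2)
      by (split; [apply Rlt_div_r | apply Rlt_div_l]; lra).
    assert (0 < cos (PI * (z / (2 * S)))) by (apply cos_gt_0; nra).
    repeat apply Rmult_lt_0_compat; lra.
  - now apply theta3_pos.
  - now apply theta4_pos.
Qed.

Theorem mainTheorem1 (p : R) (u v : nat -> R) (M : nat) :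
  0 < p < 1 ->
  0 < u 1%nat -> 0 < u 2%nat ->
  Rabs (v 1%nat) < u 1%nat + 1/2 -> Rabs (v 2%nat) < u 2%nat + 1/2 ->
  let alpha := PI / (u 1%nat + u 2%nat + INR M) in
  forall k : nat, (1 <= k <= M)%nat ->
  let K := INR k in
  (* well-definedness: all normalisations and denominators are nonzero *)
  (forall r : nat, (1 <= r <= 4)%nat ->
     bracket_den p alpha r <> 0 /\
     bracket p alpha r (u 1%nat + K) <> 0 /\
     bracket p alpha r (u 1%nat - 1/2 + K) <> 0 /\
     bracket p alpha r (u 2%nat + K) <> 0 /\
     bracket p alpha r (u 2%nat - 1/2 + K) <> 0) /\
  (* a_k > 0 *)
  0 < prod4 (fun r =>
        bracket p alpha r (u 1%nat - u r + K) *
        bracket p alpha r (u 1%nat - v r - 1/2 + K) /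
        (bracket p alpha r (u 1%nat + K) *
         bracket p alpha r (u 1%nat - 1/2 + K))) /\
  (* tilde a_k > 0 *)
  0 < prod4 (fun r =>
        bracket p alpha r (u 2%nat - u (pi2 r) + K) *
        bracket p alpha r (u 2%nat - v (pi2 r) - 1/2 + K) /
        (bracket p alpha r (u 2%nat + K) *
         bracket p alpha r (u 2%nat - 1/2 + K))).
Proof.
  intros Hp Hu1 Hu2 Hv1 Hv2 alpha k Hk K.
  apply Rabs_def2 in Hv1. apply Rabs_def2 in Hv2.
  assert (HK1 : 1 <= K) by (apply (le_INR 1); lia).
  assert (HKM : K <= INR M) by (apply le_INR; lia).
  assert (HS : 0 < u 1%nat + u 2%nat + INR M) by lra.
  split.
  - intros r Hr.
    assert (Halpha : 0 < alpha) by (apply Rdiv_lt_0_compat; [apply PI_RGT_0 | exact HS]).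
    repeat split; apply Rgt_not_eq;
      [now apply bracket_den_pos | apply bracket_pos; assumption || intros; lra ..].
  - unfold prod4, pi2.
    split; repeat first [apply bracket_pos | apply Rdiv_lt_0_compat | apply Rmult_lt_0_compat];
      assumption || lia || intros; discriminate || lra.
Qed.
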